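(* Let $1\le k\le\infty$ and $\mathbf n=(n_i)$ positive integers such that $\{\ln n_i\}_{1\le i\le k}$ is rationally independent. Then the topological $k$-graph $\Lambda_{\mathbf n}$ satisfies Condition (A).
   Context: $\mathbf n^p=\prod n_i^{p_i}$. $\Lambda_{\mathbf n}=\bigsqcup_{p\in\mathbb N^k}\mathbb T\times\{p\}$ with vertices $\mathbb T\times\{0\}$, $r(z,p)=(z,0)$, $s(z,p)=(z^{\mathbf n^p},0)$, $d(z,p)=p$, composition $(z,p)(z^{\mathbf n^p},q)=(z,p+q)$, topology of a disjoint union of circles. An infinite path in a (topological) $k$-graph $\Lambda$ is a map $\mu$ from $\{(p,q)\in\mathbb N^k\times\mathbb N^k:p\le q\}$ to $\Lambda$ with $d(\mu(p,q))=q-p$ and $\mu(p,q)\mu(q,r)=\mu(p,r)$; its range is $\mu(0,0)$; the shift is $\sigma^m(\mu)(p,q)=\mu(p+m,q+m)$. Condition (A): for every $v\in\Lambda^0$ and every open neighbourhood $V$ of $v$ there exist $v'\in V$ and an infinite path $\mu$ with range $v'$ such that $\sigma^p(\mu)\neq\sigma^q(\mu)$ whenever $p\neq q$. Rationally independent means every finite subfamily is linearly independent over $\mathbb Q$. *)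

From Stdlib Require Import Reals QArith Qreals ClassicalEpsilon.
Open Scope R_scope.

(* ---------- The index set {i : 1 <= i <= k}, 1 <= k <= infinity ----------
   We index from 0: k = Some m means indices {0,...,m-1}; k = None means
   k = infinity, indices = all of nat. *)
Definition inI (k : option nat) (i : nat) : Prop :=
  match k with Some m => (i < m)%nat | None => True end.

Definition valid_k (k : option nat) : Prop :=
  match k with Some m => (1 <= m)%nat | None => True end.

Definition isDeg (k : option nat) (p : nat -> nat) : Prop :=
  (forall i, ~ inI k i -> p i = 0%nat) /\
  (exists B, forall i, (B <= i)%nat -> p i = 0%nat).

Definition degLe (p q : nat -> nat) : Prop := forall i, (p i <= q i)%nat.
Definition degAdd (p q : nat -> nat) : nat -> nat := fun i => (p i + q i)%nat.
Definition degSub (q p : nat -> nat) : nat -> nat := fun i => (q i - p i)%nat.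
Definition deg0 : nat -> nat := fun _ => 0%nat.

(* a bound for the support of p (valid whenever p is finitely supported) *)
Definition suppBound (p : nat -> nat) : nat :=
  epsilon (inhabits 0%nat) (fun B => forall i, (B <= i)%nat -> p i = 0%nat).

Fixpoint prodUpTo (f : nat -> nat) (B : nat) : nat :=
  match B with O => 1%nat | S B' => (prodUpTo f B' * f B')%nat end.

Definition npow (n : nat -> nat) (p : nat -> nat) : nat :=
  prodUpTo (fun i => Nat.pow (n i) (p i)) (suppBound p).

Definition onT (z : R * R) : Prop := (fst z)^2 + (snd z)^2 = 1.
Definition cmul (z w : R * R) : R * R :=
  (fst z * fst w - snd z * snd w, fst z * snd w + snd z * fst w).
Fixpoint cpow (z : R * R) (N : nat) : R * R :=
  match N with O => (1, 0) | S N' => cmul (cpow z N') z end.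
Definition cdist (z w : R * R) : R :=
  sqrt ((fst z - fst w)^2 + (snd z - snd w)^2).

Definition Lam := ((R * R) * (nat -> nat))%type.
Definition inLam (k : option nat) (a : Lam) : Prop := onT (fst a) /\ isDeg k (snd a).
Definition lrange (a : Lam) : Lam := (fst a, deg0).
Definition lsource (n : nat -> nat) (a : Lam) : Lam := (cpow (fst a) (npow n (snd a)), deg0).
Definition ldeg (a : Lam) : nat -> nat := snd a.
(* composition (z,p)(z^{n^p},q) = (z,p+q), defined when s(a) = r(b) *)
Definition lcomp (a b : Lam) : Lam := (fst a, degAdd (snd a) (snd b)).

(* ---------- Infinite paths ----------
   mu is given as a total function on pairs; only its values on
   {(p,q) in N^k x N^k : p <= q} matter. *)
Definition infPath (k : option nat) (n : nat -> nat) (mu : (nat -> nat) -> (nat -> nat) -> Lam) : Prop :=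
  (forall p q, isDeg k p -> isDeg k q -> degLe p q ->
     inLam k (mu p q) /\ ldeg (mu p q) = degSub q p) /\
  (forall p q r, isDeg k p -> isDeg k q -> isDeg k r -> degLe p q -> degLe q r ->
     lsource n (mu p q) = lrange (mu q r) /\ lcomp (mu p q) (mu q r) = mu p r).

Definition pathRange (mu : (nat -> nat) -> (nat -> nat) -> Lam) : Lam := mu deg0 deg0.

Definition shift (m : nat -> nat) (mu : (nat -> nat) -> (nat -> nat) -> Lam) :
  (nat -> nat) -> (nat -> nat) -> Lam :=
  fun p q => mu (degAdd p m) (degAdd q m).

Definition pathNeq (k : option nat) (mu nu : (nat -> nat) -> (nat -> nat) -> Lam) : Prop :=
  exists p q, isDeg k p /\ isDeg k q /\ degLe p q /\ mu p q <> nu p q.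

Definition isVertex (k : option nat) (v : Lam) : Prop := onT (fst v) /\ snd v = deg0.
Definition openInVertices (k : option nat) (V : Lam -> Prop) : Prop :=
  (forall w, V w -> isVertex k w) /\
  (forall w, V w -> exists eps, eps > 0 /\
      forall w', isVertex k w' -> cdist (fst w) (fst w') < eps -> V w').

Definition conditionA (k : option nat) (n : nat -> nat) : Prop :=
  forall v, isVertex k v ->
  forall V, openInVertices k V -> V v ->
  exists v' mu, V v' /\ infPath k n mu /\ pathRange mu = v' /\
    (forall p q, isDeg k p -> isDeg k q -> p <> q -> pathNeq k (shift p mu) (shift q mu)).

Fixpoint sumUpTo (f : nat -> R) (B : nat) : R :=
  match B with O => 0 | S B' => sumUpTo f B' + f B' end.

Definition ratIndepLn (k : option nat) (n : nat -> nat) : Prop :=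
  forall (B : nat) (c : nat -> Q),
    (forall i, (i < B)%nat -> inI k i) ->
    sumUpTo (fun i => Q2R (c i) * ln (INR (n i))) B = 0 ->
    forall i, (i < B)%nat -> c i == 0%Q.

(* Pick a point z = e^{i pi theta} with theta irrational, as close to the given vertex as
   desired; irrationals are dense because one of theta0 + eta, theta0 + 2 eta is irrational
   whenever eta = sqrt 2 / K is.  The orbit path mu(p,q) = (z^{n^p}, q - p) is an infinite
   path with range z, and sigma^p mu, sigma^q mu already differ at (0,0): z is not a root of
   unity, and p |-> n^p is injective since ln n^p = sum_i p_i ln n_i and the ln n_i are
   rationally independent. *)
From Stdlib Require Import Reals QArith Qreals Lia Lra Psatz Znat.
From Stdlib Require Import Classical ClassicalEpsilon FunctionalExtensionality.
Open Scope R_scope.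

Definition rational (x : R) : Prop := exists a d : Z, d <> 0%Z /\ x * IZR d = IZR a.

Lemma nat_square_neq_double_square (a d : nat) : d <> 0%nat -> (a * a <> 2 * d * d)%nat.
Proof.
  revert d; induction a as [a IH] using (well_founded_induction Wf_nat.lt_wf).
  intros d Hd E.
  destruct (Nat.Even_or_Odd a) as [[m ->]|[m ->]]; [|nia].
  apply (IH d ltac:(nia) m); nia.
Qed.

Lemma sqrt2_irrational : ~ rational (sqrt 2).
Proof.
  intros [a [d [Hd E]]].
  assert (Ea : (a * a = 2 * d * d)%Z).
  { apply eq_IZR; rewrite !mult_IZR, <- E.
    replace (sqrt 2 * IZR d * (sqrt 2 * IZR d)) with (sqrt 2 * sqrt 2 * IZR d * IZR d) by ring.
    rewrite sqrt_sqrt by lra; ring. }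
  apply (nat_square_neq_double_square (Z.abs_nat a) (Z.abs_nat d)); [lia|].
  apply Nat2Z.inj; rewrite !Nat2Z.inj_mul, !Zabs2Nat.id_abs, <- !Z.abs_mul, Ea.
  rewrite !Z.abs_mul; reflexivity.
Qed.

Lemma rational_sub (x y : R) : rational x -> rational y -> rational (y - x).
Proof.
  intros [a1 [d1 [H1 E1]]] [a2 [d2 [H2 E2]]].
  exists (a2 * d1 - a1 * d2)%Z, (d1 * d2)%Z; split; [lia|].
  rewrite minus_IZR, !mult_IZR, <- E1, <- E2; ring.
Qed.

Lemma exists_irrational_near (x eps : R) : 0 < eps ->
  exists th, ~ rational th /\ Rabs (th - x) < eps.
Proof.
  intros Heps.
  assert (Hs2 : 0 < sqrt 2) by (apply sqrt_lt_R0; lra).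
  destruct (INR_unbounded (2 * sqrt 2 / eps)) as [K HK].
  assert (HK0 : 0 < INR K).
  { apply Rlt_trans with (2 * sqrt 2 / eps); [|exact HK].
    apply Rdiv_lt_0_compat; lra. }
  set (eta := sqrt 2 / INR K).
  assert (Heta : 0 < eta) by (apply Rdiv_lt_0_compat; lra).
  assert (Heta2 : 2 * eta < eps).
  { unfold eta; apply (Rmult_lt_reg_r (INR K)); [exact HK0|].
    field_simplify; [|lra].
    apply (Rmult_lt_compat_r eps) in HK; [|exact Heps].
    unfold Rdiv in HK; rewrite Rmult_assoc, Rinv_l in HK by lra; lra. }
  destruct (classic (rational (x + eta))) as [R1|R1];
    [destruct (classic (rational (x + 2 * eta))) as [R2|R2]|].
  - exfalso; apply sqrt2_irrational.
    destruct (rational_sub _ _ R1 R2) as [a [d [Hd E]]].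
    exists (a * Z.of_nat K)%Z, d; split; [exact Hd|].
    rewrite mult_IZR, <- INR_IZR_INZ, <- E; unfold eta; field; lra.
  - exists (x + 2 * eta); split; [exact R2|rewrite Rabs_right; lra].
  - exists (x + eta); split; [exact R1|rewrite Rabs_right; lra].
Qed.

Definition polar (t : R) : R * R := (cos t, sin t).

Lemma onT_polar (t : R) : onT (polar t).
Proof. unfold onT, polar; simpl. pose proof (sin2_cos2 t) as H; unfold Rsqr in H; nra. Qed.

Lemma onT_exists_polar (z : R * R) : onT z -> exists t, z = polar t.
Proof.
  destruct z as [x y]; unfold onT, polar; simpl; intro H.
  assert (Hx : -1 <= x <= 1) by (split; nra).
  assert (Hs : sqrt (1 - x²) = Rabs y).
  { replace (1 - x²) with y² by (unfold Rsqr; nra). apply sqrt_Rsqr_abs. }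
  destruct (Rle_or_lt 0 y) as [Hy|Hy].
  - exists (acos x); rewrite cos_acos, sin_acos, Hs, Rabs_right by lra; reflexivity.
  - exists (- acos x); rewrite cos_neg, sin_neg, cos_acos, sin_acos, Hs, Rabs_left by lra.
    f_equal; ring.
Qed.

Lemma cpow_polar (t : R) (N : nat) : cpow (polar t) N = polar (INR N * t).
Proof.
  induction N as [|N IH]; simpl cpow.
  - unfold polar; rewrite Rmult_0_l, cos_0, sin_0; reflexivity.
  - rewrite IH, S_INR, Rmult_plus_distr_r, Rmult_1_l; unfold polar, cmul; simpl.
    rewrite cos_plus, sin_plus; f_equal; ring.
Qed.

Lemma Rabs_sin_le (x : R) : Rabs (sin x) <= Rabs x.
Proof.
  assert (Hpos : forall y, 0 < y -> Rabs (sin y) <= y).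
  { intros y Hy; pose proof (sin_lt_x y Hy); pose proof (SIN_bound y).
    apply Rabs_le; split; [|lra].
    destruct (Rle_or_lt y 1); [|lra].
    pose proof PI2_1; enough (0 < sin y) by lra.
    apply sin_gt_0; lra. }
  destruct (Rtotal_order x 0) as [H|[->|H]].
  - rewrite <- Rabs_Ropp, <- sin_neg, (Rabs_left x) by lra; apply Hpos; lra.
  - rewrite sin_0; lra.
  - rewrite (Rabs_right x) by lra; apply Hpos; lra.
Qed.

Lemma cdist_polar_le (a b : R) : cdist (polar a) (polar b) <= Rabs (a - b).
Proof.
  unfold cdist, polar; cbn [fst snd].
  set (c := (a - b) / 2); set (s := sin c).
  (* the chord has length 2 |sin((a - b)/2)| *)
  assert (Echord : (cos a - cos b) ^ 2 + (sin a - sin b) ^ 2 = (2 * s)²).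
  { pose proof (sin2_cos2 a); pose proof (sin2_cos2 b); pose proof (cos_2a_sin c) as Hc.
    replace (2 * c) with (a - b) in Hc by (unfold c; field).
    rewrite cos_minus in Hc; unfold Rsqr in *; fold s in Hc; nra. }
  rewrite Echord, sqrt_Rsqr_abs, Rabs_mult, Rabs_right by lra.
  replace (a - b) with (2 * c) by (unfold c; field).
  rewrite Rabs_mult, (Rabs_right 2) by lra.
  pose proof (Rabs_sin_le c) as Hsin; fold s in Hsin; lra.
Qed.

Lemma cpow_polar_irrational_inj (th : R) (A B : nat) : ~ rational th ->
  cpow (polar (PI * th)) A = cpow (polar (PI * th)) B -> A = B.
Proof.
  intros Hirr E; rewrite !cpow_polar in E; injection E as Ec Es.
  destruct (Nat.eq_dec A B) as [|Hne]; [assumption|exfalso].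
  assert (S0 : sin (INR A * (PI * th) - INR B * (PI * th)) = 0)
    by (rewrite sin_minus, Ec, Es; ring).
  destruct (sin_eq_0_0 _ S0) as [m Hm].
  apply Hirr; exists m, (Z.of_nat A - Z.of_nat B)%Z; split; [lia|].
  rewrite minus_IZR, <- !INR_IZR_INZ.
  pose proof PI_RGT_0; apply (Rmult_eq_reg_r PI); [|lra].
  rewrite <- Hm; ring.
Qed.

Definition fpow (n p : nat -> nat) : nat -> nat := fun i => Nat.pow (n i) (p i).

Lemma isDeg_deg0 (k : option nat) : isDeg k deg0.
Proof. split; [reflexivity|exists 0%nat; reflexivity]. Qed.

Lemma isDeg_common_bound (k : option nat) (p q : nat -> nat) : isDeg k p -> isDeg k q ->
  exists B, (forall i, (B <= i)%nat -> p i = 0%nat /\ q i = 0%nat) /\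
            (forall i, (i < B)%nat -> inI k i).
Proof.
  intros [Hp1 [Bp Hp]] [Hq1 [Bq Hq]]; destruct k as [m|].
  - exists m; split; [intros i Hi; split; [apply Hp1|apply Hq1]|]; simpl; lia.
  - exists (Nat.max Bp Bq); split; [intros i Hi; split; [apply Hp|apply Hq]; lia|].
    simpl; auto.
Qed.

Lemma prodUpTo_fpow_add (n p : nat -> nat) (B d : nat) :
  (forall i, (B <= i)%nat -> p i = 0%nat) ->
  prodUpTo (fpow n p) (B + d) = prodUpTo (fpow n p) B.
Proof.
  intros H; induction d as [|d IH]; [now rewrite Nat.add_0_r|].
  rewrite Nat.add_succ_r; simpl; rewrite IH; unfold fpow; rewrite H by lia; simpl; lia.
Qed.

Lemma npow_prodUpTo (n p : nat -> nat) (B : nat) :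
  (forall i, (B <= i)%nat -> p i = 0%nat) -> npow n p = prodUpTo (fpow n p) B.
Proof.
  intros H.
  assert (Hs : forall i, (suppBound p <= i)%nat -> p i = 0%nat)
    by (unfold suppBound; apply epsilon_spec; exists B; exact H).
  unfold npow; fold (fpow n p).
  rewrite <- (prodUpTo_fpow_add n p (suppBound p) (B - suppBound p) Hs),
          <- (prodUpTo_fpow_add n p B (suppBound p - B) H).
  f_equal; lia.
Qed.

Lemma npow_deg0 (n : nat -> nat) : npow n deg0 = 1%nat.
Proof. exact (npow_prodUpTo n deg0 0 (fun _ _ => eq_refl)). Qed.

Lemma prodUpTo_mul (f g : nat -> nat) (B : nat) :
  prodUpTo (fun i => f i * g i)%nat B = (prodUpTo f B * prodUpTo g B)%nat.
Proof. induction B as [|B IH]; simpl; [reflexivity|]; rewrite IH; lia. Qed.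

Lemma npow_add (n p q : nat -> nat) (B : nat) :
  (forall i, (B <= i)%nat -> p i = 0%nat /\ q i = 0%nat) ->
  npow n (degAdd p q) = (npow n p * npow n q)%nat.
Proof.
  intros H.
  rewrite (npow_prodUpTo n p B), (npow_prodUpTo n q B), (npow_prodUpTo n (degAdd p q) B),
    <- prodUpTo_mul
    by (intros i Hi; unfold degAdd; destruct (H i Hi) as [Hp Hq]; rewrite ?Hp, ?Hq; reflexivity).
  f_equal; extensionality i; apply Nat.pow_add_r.
Qed.

Lemma ln_prodUpTo_fpow (n p : nat -> nat) (B : nat) : (forall i, (i < B)%nat -> (1 <= n i)%nat) ->
  ln (INR (prodUpTo (fpow n p) B)) = sumUpTo (fun i => INR (p i) * ln (INR (n i))) B.
Proof.
  induction B as [|B IH]; intros Hn; simpl; [apply ln_1|].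
  assert (Hpow : forall i, (i <= B)%nat -> 0 < INR (fpow n p i)).
  { intros i Hi; apply lt_0_INR, Nat.neq_0_lt_0, Nat.pow_nonzero; specialize (Hn i); lia. }
  assert (Hprod : 0 < INR (prodUpTo (fpow n p) B)).
  { clear IH; induction B as [|B IHB]; simpl; [lra|].
    rewrite mult_INR; apply Rmult_lt_0_compat; [apply IHB|apply Hpow]; intros; auto with arith. }
  rewrite mult_INR, ln_mult, IH by auto with arith.
  unfold fpow; rewrite pow_INR, ln_pow; [reflexivity|].
  apply lt_0_INR; specialize (Hn B); lia.
Qed.

Lemma sumUpTo_sub (f g : nat -> R) (B : nat) :
  sumUpTo (fun i => f i - g i) B = sumUpTo f B - sumUpTo g B.
Proof. induction B as [|B IH]; simpl; [ring|]; rewrite IH; ring. Qed.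

Lemma npow_inj (k : option nat) (n p q : nat -> nat) :
  (forall i, inI k i -> (1 <= n i)%nat) -> ratIndepLn k n ->
  isDeg k p -> isDeg k q -> npow n p = npow n q -> p = q.
Proof.
  intros Hn Hind Hp Hq E.
  destruct (isDeg_common_bound k p q Hp Hq) as [B [HB HI]].
  rewrite (npow_prodUpTo n p B), (npow_prodUpTo n q B) in E by (intros i Hi; apply HB, Hi).
  pose proof (f_equal (fun x => ln (INR x)) E) as Hln; cbv beta in Hln.
  rewrite !ln_prodUpTo_fpow in Hln by auto.
  set (c := fun i => inject_Z (Z.of_nat (p i) - Z.of_nat (q i))).
  assert (Hsum : sumUpTo (fun i => Q2R (c i) * ln (INR (n i))) B = 0).
  { replace (fun i => Q2R (c i) * ln (INR (n i))) with
      (fun i => INR (p i) * ln (INR (n i)) - INR (q i) * ln (INR (n i))).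
    - rewrite sumUpTo_sub, Hln; ring.
    - extensionality i; unfold c, Q2R; simpl; rewrite minus_IZR, <- !INR_IZR_INZ; field. }
  pose proof (Hind B c HI Hsum) as Hc.
  extensionality i; destruct (Nat.lt_ge_cases i B) as [Hi|Hi].
  - specialize (Hc i Hi); unfold c, Qeq in Hc; simpl in Hc; lia.
  - destruct (HB i Hi) as [-> ->]; reflexivity.
Qed.

Definition orbit_path (n : nat -> nat) (z : R * R) : (nat -> nat) -> (nat -> nat) -> Lam :=
  fun p q => (cpow z (npow n p), degSub q p).

Lemma orbit_path_infPath (k : option nat) (n : nat -> nat) (t : R) :
  infPath k n (orbit_path n (polar t)).
Proof.
  split.
  - intros p q Hp [Hq0 [Bq Hq]] Hpq; split; [|reflexivity].
    split; [simpl; rewrite cpow_polar; apply onT_polar|].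
    unfold orbit_path, degSub; simpl; split; [intros i Hi; rewrite Hq0 by exact Hi; reflexivity|].
    exists Bq; intros i Hi; rewrite Hq by exact Hi; reflexivity.
  - intros p q r Hp Hq Hr Hpq Hqr; unfold lsource, lrange, lcomp, orbit_path; simpl.
    split; f_equal.
    + destruct (isDeg_common_bound k p q Hp Hq) as [B [HB _]].
      replace q with (degAdd p (degSub q p)) at 2
        by (extensionality i; unfold degAdd, degSub; specialize (Hpq i); lia).
      rewrite (npow_add n p (degSub q p) B)
        by (intros i Hi; unfold degSub; destruct (HB i Hi) as [-> ->]; auto).
      rewrite !cpow_polar, mult_INR; f_equal; ring.
    + extensionality i; unfold degAdd, degSub; specialize (Hpq i); specialize (Hqr i); lia.
Qed.

Lemma pathRange_orbit_path (n : nat -> nat) (z : R * R) :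
  pathRange (orbit_path n z) = (z, deg0).
Proof.
  unfold pathRange, orbit_path; rewrite npow_deg0.
  destruct z as [x y]; simpl; unfold cmul; simpl; f_equal; f_equal; ring.
Qed.

Lemma orbit_path_shift_neq (k : option nat) (n : nat -> nat) (z : R * R) :
  (forall p q, isDeg k p -> isDeg k q -> cpow z (npow n p) = cpow z (npow n q) -> p = q) ->
  forall p q, isDeg k p -> isDeg k q -> p <> q ->
  pathNeq k (shift p (orbit_path n z)) (shift q (orbit_path n z)).
Proof.
  intros Hinj p q Hp Hq Hne.
  exists deg0, deg0; do 2 (split; [apply isDeg_deg0|]); split; [intro; lia|].
  intros E; injection E as E _; apply Hne, (Hinj p q Hp Hq E).
Qed.

Theorem mainTheorem9 (k : option nat) (n : nat -> nat) :
  valid_k k ->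
  (forall i, inI k i -> (1 <= n i)%nat) ->
  ratIndepLn k n ->
  conditionA k n.
Proof.
  intros _ Hn Hind [z sv] [Hz Hsv] V [_ HVopen] Vv; simpl in Hz, Hsv; subst sv.
  destruct (HVopen _ Vv) as [eps [Heps Hball]].
  destruct (onT_exists_polar z Hz) as [t0 ->].
  pose proof PI_RGT_0.
  destruct (exists_irrational_near (t0 / PI) (eps / PI)) as [th [Hirr Hnear]];
    [apply Rdiv_lt_0_compat; lra|].
  assert (Hclose : Rabs (PI * th - t0) < eps).
  { replace (PI * th - t0) with (PI * (th - t0 / PI)) by (field; lra).
    rewrite Rabs_mult, Rabs_right by lra.
    apply (Rmult_lt_compat_l PI) in Hnear; [|lra].
    replace (PI * (eps / PI)) with eps in Hnear by (field; lra); exact Hnear. }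
  exists (polar (PI * th), deg0), (orbit_path n (polar (PI * th))).
  split; [|split; [|split]].
  - apply Hball; [split; [apply onT_polar|reflexivity]|].
    simpl; rewrite Rabs_minus_sym in Hclose.
    exact (Rle_lt_trans _ _ _ (cdist_polar_le _ _) Hclose).
  - apply orbit_path_infPath.
  - apply pathRange_orbit_path.
  - apply orbit_path_shift_neq; intros p q Hp Hq E.
    exact (npow_inj k n p q Hn Hind Hp Hq (cpow_polar_irrational_inj th _ _ Hirr E)).
Qed.
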